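(* Let $a$ and $b$ be coprime positive integers and let $\ell\in G_{(a,b)}$ with $\ell\notin\{1,2\}$. Then $\mathrm{ord}_\ell(ab^{-1})$ is even, $\min\mathcal{K}_{(a,b)}(\ell)=\mathrm{ord}_\ell(ab^{-1})/2$, and $$\mathcal{K}_{(a,b)}(\ell)=\Bigl\{\alpha\cdot\tfrac{\mathrm{ord}_\ell(ab^{-1})}{2}:\ \alpha \text{ an odd positive integer}\Bigr\},$$ which is an infinite set.
   Context: For nonzero integers $x,y$, $G_{(x,y)}$ is the set of positive integers $n$ such that $n\mid(x^k+y^k)$ for some positive integer $k$; for such $n$, $\mathcal{K}_{(x,y)}(n)=\{k\text{ positive integer}: n\mid(x^k+y^k)\}$. For $\ell$ coprime to $ab$ (which holds when $\ell\in G_{(a,b)}$ and $\gcd(a,b)=1$), $\mathrm{ord}_\ell(ab^{-1})$ is the multiplicative order modulo $\ell$ of $ab^{-1}$, with $b^{-1}$ the inverse of $b$ modulo $\ell$. *)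

From mathcomp Require Import all_boot.
Set Implicit Arguments. Unset Strict Implicit. Unset Printing Implicit Defensive.

Definition inG (x y n : nat) : Prop :=
  0 < n /\ exists k, 0 < k /\ n %| x ^ k + y ^ k.

Definition inK (x y n k : nat) : Prop := 0 < k /\ n %| x ^ k + y ^ k.

(* inverse of b modulo l: the least c < l with b * c = 1 mod l (exists when coprime b l) *)
Definition invmod (l b : nat) : nat :=
  let s := iota 0 l in nth 0 s (find (fun c => b * c == 1 %[mod l]) s).

(* multiplicative order of x modulo l: least m in 1..l with x^m = 1 mod l
   (exists, and is <= l, when coprime x l and l >= 1) *)
Definition ordmod (l x : nat) : nat :=
  let s := iota 1 l in nth 0 s (find (fun m => x ^ m == 1 %[mod l]) s).

Definition ord_ab (l a b : nat) : nat := ordmod l (a * invmod l b).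

From mathcomp Require Import all_boot zify cyclic.

Set Implicit Arguments.
Unset Strict Implicit.
Unset Printing Implicit Defensive.

(* Pick c with b c = 1 (mod l) and put x = a c, so that l | a^k + b^k iff
   x^k = -1 (mod l).  If d is the order of x, such a k satisfies d | 2k but
   not d | k (as l > 2), hence d is even and k is an odd multiple of d/2;
   conversely x^(d/2) = -1 once a single such k exists, and then every odd
   multiple of d/2 works since x^(alpha d/2) = x^(d/2) for odd alpha. *)

Lemma totient_leq n : totient n <= n.
Proof.
rewrite totient_count_coprime -[leqRHS]subn0 -[leqRHS]muln1 -sum_nat_const_nat.
by apply: leq_sum => i _; apply: leq_b1.
Qed.

Lemma dvdn_eqmod l m n : m = n %[mod l] -> (l %| m) = (l %| n).
Proof. by rewrite /dvdn => ->. Qed.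

Lemma coprime_dvdn_addX u v l k :
  coprime u v -> 0 < k -> l %| u ^ k + v ^ k -> coprime l u.
Proof.
move=> cuv k_gt0 /coprime_dvdl; apply; rewrite coprime_sym.
by rewrite /coprime -(prednK k_gt0) expnS mulnC gcdnMDl; apply: coprimeXr.
Qed.

Lemma find_iotaP (P : pred nat) m n i : i \in iota m n -> P i ->
  let j := nth 0 (iota m n) (find P (iota m n)) in
  [/\ m <= j, P j & forall k, m <= k < j -> ~~ P k].
Proof.
move=> iota_i Pi j.
have hasP : has P (iota m n) by apply/hasP; exists i.
have find_lt : find P (iota m n) < n by rewrite -[ltnRHS](size_iota m) -has_find.
have j_def : j = m + find P (iota m n) by rewrite /j nth_iota.
split; [by rewrite j_def leq_addr | exact: nth_find |].
move=> k /andP[m_le_k]; rewrite j_def => k_lt.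
have kpos_lt : k - m < find P (iota m n) by lia.
have := before_find 0 kpos_lt.
by rewrite nth_iota ?subnKC // => [->|]; lia.
Qed.

Lemma invmodP l b : 0 < l -> coprime b l -> b * invmod l b = 1 %[mod l].
Proof.
move=> l_gt0 cbl.
have inv_in_iota : b ^ (totient l).-1 %% l \in iota 0 l by rewrite mem_iota ltn_mod.
have inv_inverse : b * (b ^ (totient l).-1 %% l) == 1 %[mod l].
  by rewrite modnMmr -expnS prednK ?totient_gt0 // Euler_exp_totient.
by have [_ /eqP] :=
  find_iotaP (P := fun c => b * c == 1 %[mod l]) inv_in_iota inv_inverse.
Qed.

Lemma expn_mod_period l x d m : x ^ d = 1 %[mod l] -> x ^ m = x ^ (m %% d) %[mod l].
Proof.
move=> xd1; rewrite {1}(divn_eq m d) expnD (mulnC _ d) expnM -modnMml -modnXm xd1.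
by rewrite modnXm exp1n modnMml mul1n.
Qed.

Section MultiplicativeOrder.

Variables l x : nat.
Hypotheses (l_gt0 : 0 < l) (cxl : coprime x l).

Lemma ordmodP :
  [/\ 0 < ordmod l x, x ^ ordmod l x = 1 %[mod l] &
      forall m, 0 < m < ordmod l x -> x ^ m != 1 %[mod l]].
Proof.
have totient_in_iota : totient l \in iota 1 l.
  by have := totient_leq l; rewrite mem_iota totient_gt0 l_gt0; lia.
have [] := find_iotaP (P := fun m => x ^ m == 1 %[mod l]) totient_in_iota.
  by apply/eqP; exact: Euler_exp_totient.
by move=> d_gt0 /eqP.
Qed.

Lemma expn_eq1_mod_ordmod m : (x ^ m == 1 %[mod l]) = (ordmod l x %| m).
Proof.
have [d_gt0 xd1 dmin] := ordmodP.
rewrite /dvdn (expn_mod_period m xd1).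
have := ltn_mod m (ordmod l x); rewrite d_gt0.
case: (m %% ordmod l x) => [|r r_lt]; first by rewrite expn0 !eqxx.
by rewrite (negbTE (dmin r.+1 r_lt)).
Qed.

End MultiplicativeOrder.

Lemma odd_mulnl_eqmod alpha h : odd alpha -> alpha * h = h %[mod h * 2].
Proof.
move=> odd_alpha; rewrite -(odd_double_half alpha) odd_alpha mulnDl mul1n.
by rewrite -muln2 -mulnA [2 * h]mulnC addnC modnMDl.
Qed.

Lemma expn_oddmul_half_period h alpha l x :
  x ^ (h * 2) = 1 %[mod l] -> odd alpha -> x ^ (alpha * h) = x ^ h %[mod l].
Proof.
move=> xd1 odd_alpha.
rewrite (expn_mod_period (alpha * h) xd1) odd_mulnl_eqmod //.
by rewrite -(expn_mod_period h xd1).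
Qed.

Lemma odd_multiple_half d k : ~~ (d %| k) -> d %| k * 2 ->
  ~~ odd d /\ exists alpha, odd alpha /\ k = alpha * (d %/ 2).
Proof.
move=> d_ndvd_k /dvdnP[m k2_def].
have odd_m : odd m.
  apply: contraR d_ndvd_k => even_m; apply/dvdnP; exists m./2.
  by move: k2_def; rewrite -{1}(odd_double_half m) (negbTE even_m); lia.
have even_d : ~~ odd d.
  by move: (congr1 odd k2_def); rewrite !oddM odd_m andbF /= => <-.
split => //; exists m; split => //.
by move: k2_def; rewrite -{1}(odd_double_half d) (negbTE even_d) -divn2; lia.
Qed.

Section MinusOneModulo.

Variables l x : nat.
Hypotheses (l_gt2 : 2 < l) (cxl : coprime x l).
Local Notation d := (ordmod l x).

Lemma ordmod_of_dvdn_expn_add1 k :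
  l %| x ^ k + 1 -> ~~ (d %| k) /\ d %| k * 2.
Proof.
have l_gt0 : 0 < l by lia.
move=> l_dvd; rewrite -!expn_eq1_mod_ordmod //; split.
  apply: contraL l_dvd => /eqP xk1; rewrite (dvdn_eqmod (_ : _ = 1 + 1 %[mod l])).
    by apply/negP => /dvdn_leq; lia.
  by rewrite -modnDml xk1 modnDml.
have sq_plus : x ^ (k * 2) + x ^ k = x ^ k * (x ^ k + 1).
  by rewrite muln2 -addnn expnD mulnDr muln1.
rewrite -(eqn_modDr (x ^ k)) sq_plus [1 + _]addnC.
by move: l_dvd; rewrite /dvdn -modnMmr => /eqP ->; rewrite muln0 mod0n.
Qed.

Lemma dvdn_expn_add1P k0 : l %| x ^ k0 + 1 ->
  [/\ ~~ odd d, 0 < d %/ 2 & forall k, l %| x ^ k + 1 <->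
    exists alpha, odd alpha /\ k = alpha * (d %/ 2)].
Proof.
move=> l_dvd_k0; have [d_ndvd d_dvd2] := ordmod_of_dvdn_expn_add1 l_dvd_k0.
have [even_d [alpha0 [odd_alpha0 k0_def]]] := odd_multiple_half d_ndvd d_dvd2.
have [d_gt0 _ _] := ordmodP (ltnW (ltnW l_gt2)) cxl.
have d_half : d %/ 2 * 2 = d by rewrite divnK ?dvdn2.
have xd1 : x ^ (d %/ 2 * 2) = 1 %[mod l].
  by rewrite d_half; apply/eqP; rewrite expn_eq1_mod_ordmod //; lia.
have odd_multiple_dvd alpha : odd alpha ->
    (l %| x ^ (alpha * (d %/ 2)) + 1) = (l %| x ^ (d %/ 2) + 1).
  move=> odd_alpha; apply: dvdn_eqmod.
  by rewrite -modnDml expn_oddmul_half_period // modnDml.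
have half_gt0 : 0 < d %/ 2 by move: d_gt0; rewrite -{1}d_half muln_gt0 => /andP[].
split => // k; split => [l_dvd_k | [alpha [odd_alpha ->]]].
  have [d_ndvd_k d_dvd2_k] := ordmod_of_dvdn_expn_add1 l_dvd_k.
  by have [] := odd_multiple_half d_ndvd_k d_dvd2_k.
by rewrite odd_multiple_dvd // -(odd_multiple_dvd alpha0) // -k0_def.
Qed.

End MinusOneModulo.

Lemma dvdn_addX_mulinv a b c l k : b * c = 1 %[mod l] ->
  (l %| a ^ k + b ^ k) = (l %| (a * c) ^ k + 1).
Proof.
move=> bc1; have bck1 : (b * c) ^ k = 1 %[mod l] by rewrite -modnXm bc1 modnXm exp1n.
have scale_c : (a ^ k + b ^ k) * c ^ k = (a * c) ^ k + 1 %[mod l].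
  by rewrite mulnDl -!expnMn -modnDmr bck1 modnDmr.
have scale_b : ((a * c) ^ k + 1) * b ^ k = a ^ k + b ^ k %[mod l].
  rewrite mulnDl mul1n expnMn -mulnA -expnMn (mulnC c) -modnDml -modnMmr bck1.
  by rewrite modnMmr muln1 modnDml.
apply/idP/idP => l_dvd.
  by rewrite -(dvdn_eqmod scale_c) dvdn_mulr.
by rewrite -(dvdn_eqmod scale_b) dvdn_mulr.
Qed.

Theorem lemma2p11 (a b l : nat) :
  0 < a -> 0 < b -> coprime a b -> inG a b l -> l != 1 -> l != 2 ->
  [/\ ~~ odd (ord_ab l a b),
      inK a b l (ord_ab l a b %/ 2)
      /\ (forall k, inK a b l k -> ord_ab l a b %/ 2 <= k),
      (forall k, inK a b l k <->
         exists alpha, odd alpha /\ k = alpha * (ord_ab l a b %/ 2))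
    & (forall N, exists k, N < k /\ inK a b l k)].
Proof.
move=> _ _ cab [l_gt0 [k0 [k0_gt0 l_dvd_k0]]] l_neq1 l_neq2.
have l_gt2 : 2 < l by lia.
have cbl : coprime b l.
  by rewrite coprime_sym (coprime_dvdn_addX (v := a) _ k0_gt0) 1?addnC // coprime_sym.
rewrite /inK /ord_ab; set x := a * invmod l b.
have dvdn_x k : (l %| a ^ k + b ^ k) = (l %| x ^ k + 1).
  exact/dvdn_addX_mulinv/invmodP.
have cxl : coprime x l.
  rewrite coprime_sym; apply: (coprime_dvdn_addX (coprimen1 x) k0_gt0).
  by rewrite exp1n -dvdn_x.
rewrite dvdn_x in l_dvd_k0.
have [even_d h_gt0 dvdn_x_odd] := dvdn_expn_add1P l_gt2 cxl l_dvd_k0.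
set h := ordmod l x %/ 2 in h_gt0 dvdn_x_odd *.
have inKP k : 0 < k /\ l %| a ^ k + b ^ k <-> exists alpha, odd alpha /\ k = alpha * h.
  rewrite dvdn_x dvdn_x_odd; split => [[] //|[alpha [odd_alpha k_def]]].
  by rewrite k_def muln_gt0 odd_gt0 //; split=> //; exists alpha.
split => //.
- split; first by apply/inKP; exists 1; rewrite mul1n.
  by move=> k /inKP[alpha [odd_alpha ->]]; rewrite leq_pmull // odd_gt0.
- move=> N; exists (N.*2.+1 * h); split; first by nia.
  by apply/inKP; exists N.*2.+1; rewrite /= odd_double.
Qed.
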